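(* For any nonempty rooted trees $a$ and $b$, $\Lambda(a\bowtie b)=\Lambda(a)\diamond\Lambda(b)$.
   Context: Let $k$ be a field of characteristic $0$. $\mathcal H_{CK}$ is the free commutative $k$-algebra on isomorphism classes of nonempty (non-planar, finite) rooted trees, i.e. rooted forests with unit the empty forest $\mathbf 1$; $B_+(t_1\cdots t_n)$ is the tree obtained by joining the roots of $t_1,\dots,t_n$ to a new root ($B_+(\mathbf 1)=\bullet$). $\mathcal A=k[x]$ carries the quasi-shuffle product $\diamond$, the commutative associative product determined by $\mathbf 1\diamond u=u\diamond\mathbf 1=u$ and, for $k,l\ge1$, $x^k\diamond x^l=(x^{k-1}\diamond x^l)x+(x^k\diamond x^{l-1})x+(x^{k-1}\diamond x^{l-1})x$. $\Lambda:\mathcal H_{CK}\to(\mathcal A,\diamond)$ is the unique unital algebra morphism with $\Lambda(B_+(t_1\cdots t_n))=(\Lambda(t_1)\diamond\cdots\diamond\Lambda(t_n))\,x$ for all trees (so $\Lambda(\bullet)=x$). For trees $a=B_+(a_1\cdots a_n)$ and $b=B_+(b_1\cdots b_p)$: the Butcher product is $a\circ b=B_+(a_1\cdots a_nb)$, the merging product is $a\times b=B_+(a_1\cdots a_nb_1\cdots b_p)$, and $a\bowtie b=a\circ b+b\circ a+a\times b$. *)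

From HB Require Import structures.
From mathcomp Require Import all_boot all_order all_algebra.
Set Implicit Arguments. Unset Strict Implicit. Unset Printing Implicit Defensive.
Import GRing.Theory.
Local Open Scope ring_scope.

(* We use planar representatives:
   a tree is a root with a finite list of subtrees.  All notions below
   (Lambda, Butcher/merging products) are compatible with permuting
   subtrees, i.e. with tree isomorphism. *)
Inductive tree : Type := Node of seq tree.

Definition children (t : tree) : seq tree := let: Node ts := t in ts.

Definition Bplus (f : seq tree) : tree := Node f.

Definition butcher (a b : tree) : tree := Node (rcons (children a) b).
Definition merging (a b : tree) : tree := Node (children a ++ children b).

Section QSh.
Variable R : fieldType.

Fixpoint qsh_mono (m n : nat) {struct m} : {poly R} :=
  match m with
  | 0 => 'X^n
  | m'.+1 =>
      let fix aux (n : nat) : {poly R} :=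
        match n with
        | 0 => 'X^(m'.+1)
        | n'.+1 => (qsh_mono m' n + aux n' + qsh_mono m' n') * 'X
        end in aux n
  end.

Definition qsh (p q : {poly R}) : {poly R} :=
  \sum_(i < size p) \sum_(j < size q) (p`_i * q`_j) *: qsh_mono i j.

Fixpoint Lambda (t : tree) : {poly R} :=
  match t with
  | Node ts => foldr qsh 1 (map Lambda ts) * 'X
  end.

(* Lambda extended linearly to a <*> b = a o b + b o a + a x b *)
Definition Lambda_bowtie (a b : tree) : {poly R} :=
  Lambda (butcher a b) + Lambda (butcher b a) + Lambda (merging a b).

End QSh.

From HB Require Import structures.
From mathcomp Require Import all_boot all_order all_algebra.
From mathcomp Require Import ring.
Set Implicit Arguments. Unset Strict Implicit. Unset Printing Implicit Defensive.
Local Open Scope ring_scope.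
Import GRing.Theory.

(* For N : nat let binom_eval N : k[x] -> k be the linear form
   sending x^i to the binomial coefficient C(N, i).  Three facts drive the proof:
   - the family (binom_eval N)_N separates polynomials (the matrix of binomial
     coefficients is unitriangular), so identities may be checked pointwise;
   - binom_eval N (x^m <> x^n) = C(N, m) * C(N, n), so each binom_eval N is a
     character of the quasi-shuffle algebra (the recursion defining <> becomes
     Pascal's rule through the discrete product rule below);
   - binom_eval N (p * x) = sum_(M < N) binom_eval M p, i.e. multiplication by x
     is a discrete integration.
   Hence binom_eval N (Lambda t) is the partial sum up to N of the product of the
   values of Lambda on the children of t.  For a Butcher or merging product the
   children are the children of a and b, plus b or a, so the theorem becomes the
   discrete product (summation by parts) rule
     S(alpha) S(beta) = S(alpha S(beta) + beta S(alpha) + alpha beta).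
   No hypothesis on the characteristic of k is needed. *)

Section DiscreteProductRule.
Variable R : comNzRingType.

(* Summation by parts for partial sums S(alpha) N = sum_(M < N) alpha M: the
   increment of S(alpha) S(beta) at M is alpha S(beta) + beta S(alpha) + alpha beta. *)
Lemma discrete_product_rule (alpha beta : nat -> R) (N : nat) :
  (\sum_(M < N) alpha M) * (\sum_(M < N) beta M) =
  \sum_(M < N) (alpha M * \sum_(L < M) beta L + beta M * \sum_(L < M) alpha L
                + alpha M * beta M).
Proof.
elim: N => [|N IH]; first by rewrite !big_ord0 mul0r.
rewrite !big_ord_recr /= -IH; ring.
Qed.

End DiscreteProductRule.

Section BinomialEvaluation.
Variable R : nzRingType.
Implicit Types (p q : {poly R}) (N : nat).

(* Evaluation of p in the binomial basis at N: x^i is sent to C(N, i).  Terms with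
   i > N vanish, so the sum may stop at N. *)
Definition binom_eval N p : R := \sum_(i < N.+1) p`_i * 'C(N, i)%:R.

Fact binom_eval_is_linear N : linear_for *%R (binom_eval N).
Proof.
move=> c p q; rewrite /binom_eval mulr_sumr -big_split /=.
by apply: eq_bigr => i _; rewrite coefD coefZ mulrDl mulrA.
Qed.

HB.instance Definition _ N :=
  GRing.isLinear.Build R {poly R} R *%R (binom_eval N) (binom_eval_is_linear N).

Lemma binom_eval_Xn n N : binom_eval N 'X^n = 'C(N, n)%:R.
Proof.
rewrite /binom_eval; case: (leqP n N) => [le_nN | lt_Nn].
  rewrite (bigD1 (Ordinal (le_nN : (n < N.+1)%N))) //= coefXn eqxx mul1r big1 ?addr0 //.
  move=> i ne_in; rewrite coefXn (_ : (i == n :> nat) = false) ?mul0r //.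
  by apply: contraNF ne_in => /eqP eq_in; apply/eqP/val_inj.
rewrite bin_small // big1 // => i _; rewrite coefXn.
by rewrite (ltn_eqF (leq_trans (ltn_ord i) lt_Nn)) mul0r.
Qed.

Lemma binom_eval_coef N p : binom_eval N p = \sum_(i < size p) p`_i * 'C(N, i)%:R.
Proof.
rewrite -{1}[p]coefK poly_def linear_sum; apply: eq_bigr => i _.
by rewrite linearZ /= binom_eval_Xn.
Qed.

Lemma binom_eval_mulX_shift N p :
  binom_eval N (p * 'X) = \sum_(i < N.+1) p`_i * 'C(N, i.+1)%:R.
Proof.
rewrite /binom_eval big_ord_recl big_ord_recr /= coefMX eqxx mul0r add0r.
by rewrite bin_small // mulr0 addr0; apply: eq_bigr => i _; rewrite coefMX.
Qed.

(* Multiplication by x is discrete integration, by Pascal's rule. *)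
Lemma binom_eval_mulX N p : binom_eval N (p * 'X) = \sum_(M < N) binom_eval M p.
Proof.
elim: N => [|N IH]; first by rewrite binom_eval_mulX_shift big_ord1 bin0n mulr0 big_ord0.
rewrite big_ord_recr /= -IH !binom_eval_mulX_shift big_ord_recr /= bin_small // mulr0 addr0.
by rewrite /binom_eval -big_split; apply: eq_bigr => i _; rewrite binS natrD mulrDr.
Qed.

(* Hockey-stick identity, read off from binom_eval at x^(j+1) = x^j * x. *)
Lemma sum_binom_hockey_stick j M : \sum_(L < M) 'C(L, j)%:R = 'C(M, j.+1)%:R :> R.
Proof.
rewrite -[RHS]binom_eval_Xn exprSr binom_eval_mulX.
by apply: eq_bigr => L _; rewrite binom_eval_Xn.
Qed.

(* The forms binom_eval N separate polynomials: the coefficient of x^N is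
   determined by induction, since C(N, N) = 1. *)
Lemma binom_eval_inj p q : (forall N, binom_eval N p = binom_eval N q) -> p = q.
Proof.
move=> eq_pq; apply/eqP; rewrite -subr_eq0; apply/eqP/polyP => N; rewrite coef0.
have {}eq_pq M : binom_eval M (p - q) = 0 by rewrite raddfB /= eq_pq subrr.
elim/ltn_ind: N => N IH; have := eq_pq N.
rewrite /binom_eval big_ord_recr /= binn mulr1 big1 ?add0r // => i _.
by rewrite IH ?mul0r.
Qed.

End BinomialEvaluation.

Section QuasiShuffle.
Variable k : fieldType.
Implicit Types (p q : {poly k}) (N : nat).

(* binom_eval N is multiplicative on monomials: the quasi-shuffle recursion
   x^(m+1) <> x^(n+1) = (x^m <> x^(n+1) + x^(m+1) <> x^n + x^m <> x^n) x
   is the discrete product rule for alpha = C(-, m), beta = C(-, n). *)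
Lemma binom_eval_qsh_mono m n N :
  binom_eval N (qsh_mono k m n) = 'C(N, m)%:R * 'C(N, n)%:R.
Proof.
elim: m n N => [|m IHm] n N; first by rewrite binom_eval_Xn bin0 mul1r.
elim: n N => [|n IHn] N; first by rewrite [qsh_mono _ _ _]/= binom_eval_Xn bin0 mulr1.
have -> : qsh_mono k m.+1 n.+1 =
          (qsh_mono k m n.+1 + qsh_mono k m.+1 n + qsh_mono k m n) * 'X by [].
rewrite binom_eval_mulX -!sum_binom_hockey_stick.
rewrite (discrete_product_rule (fun L => 'C(L, m)%:R) (fun L => 'C(L, n)%:R)).
apply: eq_bigr => M _; rewrite !raddfD /= IHm IHn IHm !sum_binom_hockey_stick.
by congr (_ + _ + _); rewrite mulrC.
Qed.

Lemma binom_eval_qsh N p q : binom_eval N (qsh p q) = binom_eval N p * binom_eval N q.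
Proof.
rewrite /qsh linear_sum !binom_eval_coef mulr_suml; apply: eq_bigr => i _.
rewrite linear_sum mulr_sumr; apply: eq_bigr => j _.
by rewrite linearZ /= binom_eval_qsh_mono mulrACA.
Qed.

Lemma binom_eval_qsh_foldr N (ps : seq {poly k}) :
  binom_eval N (foldr (@qsh k) 1 ps) = \prod_(p <- ps) binom_eval N p.
Proof.
elim: ps => [|p ps IH]; first by rewrite big_nil -(expr0 'X) binom_eval_Xn bin0.
by rewrite big_cons /= binom_eval_qsh IH.
Qed.

Definition forest_weight (ts : seq tree) (M : nat) : k :=
  \prod_(c <- ts) binom_eval M (Lambda k c).

Lemma forest_weight_rcons ts t M :
  forest_weight (rcons ts t) M = forest_weight ts M * binom_eval M (Lambda k t).
Proof. by rewrite /forest_weight big_rcons. Qed.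

Lemma forest_weight_cat ts us M :
  forest_weight (ts ++ us) M = forest_weight ts M * forest_weight us M.
Proof. by rewrite /forest_weight big_cat. Qed.

Lemma binom_eval_Lambda N t :
  binom_eval N (Lambda k t) = \sum_(M < N) forest_weight (children t) M.
Proof.
case: t => ts; rewrite /= binom_eval_mulX.
by apply: eq_bigr => M _; rewrite binom_eval_qsh_foldr big_map.
Qed.

End QuasiShuffle.

Theorem mainTheorem13 (k : fieldType) (hk : [pchar k] =i pred0) (a b : tree) :
  Lambda_bowtie k a b = qsh (Lambda k a) (Lambda k b).
Proof.
apply: binom_eval_inj => N.
(* raddfD leaves the additive projection of binom_eval; fold it back. *)
rewrite /Lambda_bowtie !raddfD -[LHS]/(binom_eval N _ + binom_eval N _ + binom_eval N _).
rewrite binom_eval_qsh !binom_eval_Lambda discrete_product_rule -!big_split /=.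
apply: eq_bigr => M _.
by rewrite !forest_weight_rcons forest_weight_cat !binom_eval_Lambda.
Qed.
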